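(* For every quasi-symmetric bimodal model $\mathcal{M}$ there exist a symmetric bimodal model $\mathcal{M}^+$ (both relations symmetric) and a surjective $\boxdot$-morphism $h$ from $\mathcal{M}^+$ onto $\mathcal{M}$; consequently, for every state $x$ of $\mathcal{M}^+$ and every $\phi\in\mathcal{L}(\boxdot)$, $\mathcal{M}^+,x\vDash\phi$ iff $\mathcal{M},h(x)\vDash\phi$.
   Context: Fix a nonempty set $\mathbf{P}$ of propositional variables. A bimodal model is $\langle S,R_1,R_2,V\rangle$ with $S$ nonempty, $R_1,R_2\subseteq S\times S$, $V:\mathbf{P}\to\mathcal{P}(S)$. It is quasi-symmetric if for all $i,j\in\{1,2\}$ and all $s,t\in S$ such that $tR_ju$ for some $u\in S$, $sR_it$ implies $tR_is$. $\mathcal{L}(\boxdot):\ \phi::=p\mid\neg\phi\mid(\phi\wedge\phi)\mid\boxdot\phi$, with $\mathcal{M},s\vDash\boxdot\phi$ iff for all $t,u$ with $sR_1t$ and $sR_2u$, ($\mathcal{M},t\vDash\phi\iff\mathcal{M},u\vDash\phi$); atoms and Booleans as usual. A function $f:S\to S'$ is a $\boxdot$-morphism from $\langle S,R_1,R_2,V\rangle$ to $\langle S',R_1',R_2',V'\rangle$ if for all $x\in S$: (Var) $x\in V(p)$ iff $f(x)\in V'(p)$ for all $p$; (Forth) for all $y,z\in S$, if $xR_1y$, $xR_2z$ and $f(y)\neq f(z)$, then $f(x)R_1'f(y)$ and $f(x)R_2'f(z)$; (Back) for all $y',z'\in S'$, if $f(x)R_1'y'$, $f(x)R_2'z'$ and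 $y'\neq z'$, then there are $y,z\in S$ with $xR_1y$, $xR_2z$, $f(y)=y'$, $f(z)=z'$. *)

From Stdlib Require Import Classical.

Set Implicit Arguments.

(* A bimodal model <S, R1, R2, V> over the propositional variables P.
   The carrier S is a Rocq type; nonemptiness is the field [st0]. *)
Record model (P : Type) := Model {
  st : Type;
  st0 : st;
  R1 : st -> st -> Prop;
  R2 : st -> st -> Prop;
  V  : P -> st -> Prop
}.

Arguments st {P} m.
Arguments R1 {P} m _ _.
Arguments R2 {P} m _ _.
Arguments V {P} m _ _.

Definition Rel {P} (M : model P) (i : bool) : st M -> st M -> Prop :=
  if i then R1 M else R2 M.

Definition quasi_symmetric {P} (M : model P) : Prop :=
  forall (i j : bool) (s t : st M),
    (exists u, Rel M j t u) -> Rel M i s t -> Rel M i t s.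

Definition symmetric_model {P} (M : model P) : Prop :=
  (forall s t, R1 M s t -> R1 M t s) /\ (forall s t, R2 M s t -> R2 M t s).

Inductive form (P : Type) : Type :=
  | Var : P -> form P
  | Neg : form P -> form P
  | And : form P -> form P -> form P
  | Dot : form P -> form P.

Arguments Var {P} _.
Arguments Neg {P} _.
Arguments And {P} _ _.
Arguments Dot {P} _.

Fixpoint sat {P} (M : model P) (s : st M) (phi : form P) : Prop :=
  match phi with
  | Var p => V M p s
  | Neg a => ~ sat M s a
  | And a b => sat M s a /\ sat M s b
  | Dot a => forall t u, R1 M s t -> R2 M s u -> (sat M t a <-> sat M u a)
  end.

Definition dot_morphism {P} (M M' : model P) (f : st M -> st M') : Prop :=
  forall x : st M,
    (forall p, V M p x <-> V M' p (f x)) /\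
    (forall y z, R1 M x y -> R2 M x z -> f y <> f z ->
        R1 M' (f x) (f y) /\ R2 M' (f x) (f z)) /\
    (forall y' z', R1 M' (f x) y' -> R2 M' (f x) z' -> y' <> z' ->
        exists y z, R1 M x y /\ R2 M x z /\ f y = y' /\ f z = z').

Definition surjective {A B} (f : A -> B) : Prop := forall b, exists a, f a = b.

(* Given a quasi-symmetric model M we build a symmetric model M+ whose
   states are
   - a copy [Orig x] of every state x of M, and
   - for every edge s R_i t of M into a dead end t (a state without any
     successor), a private copy [Copy i s t] of t, hanging off [Orig s]
     by an R_i edge in both directions.
   Edges between original states are the edges of M into states that have
   a successor; quasi-symmetry makes exactly these edges symmetric.  The
   projection h forgets the copy information.

   First, a general transfer lemma
   for arbitrary bimodal models: a valuation-preserving map that at every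
   state either matches successors exactly (a zig-zag for R1 and R2), or
   lands on a point where ⊡ is vacuous on both sides, preserves the truth
   of all ⊡-formulas and is a ⊡-morphism. *)

From Stdlib Require Import Classical.

Set Implicit Arguments.

Definition dot_vacuous {P} (m : model P) (s : st m) : Prop :=
  forall t u, R1 m s t -> R2 m s u -> False.

Definition has_successor {P} (m : model P) (t : st m) : Prop :=
  exists (j : bool) u, Rel m j t u.

Lemma dead_end_dot_vacuous {P} (m : model P) (t : st m) :
  ~ has_successor m t -> dot_vacuous m t.
Proof. intros Hdead y _ Hy _; apply Hdead; exists true, y; exact Hy. Qed.

Section Transfer.
Variables (P : Type) (N M : model P) (h : st N -> st M).

Definition zigzag_at (x : st N) : Prop :=
  (forall k y, Rel N k x y -> Rel M k (h x) (h y)) /\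
  (forall k y', Rel M k (h x) y' -> exists y, Rel N k x y /\ h y = y').

Hypothesis h_val : forall p x, V N p x <-> V M p (h x).
Hypothesis h_local :
  forall x, zigzag_at x \/ (dot_vacuous N x /\ dot_vacuous M (h x)).

Lemma transfer_sat (x : st N) (phi : form P) : sat N x phi <-> sat M (h x) phi.
Proof.
  revert x; induction phi as [p|a IH|a IHa b IHb|a IH]; intro x; simpl.
  - apply h_val.
  - rewrite IH; tauto.
  - rewrite IHa, IHb; tauto.
  - destruct (h_local x) as [[Forth Back]|[VacN VacM]].
    + split; intros H t u Ht Hu.
      * destruct (Back true t Ht) as [t' [Ht' <-]].
        destruct (Back false u Hu) as [u' [Hu' <-]].
        rewrite <- !IH; exact (H t' u' Ht' Hu').
      * rewrite !IH; exact (H _ _ (Forth true t Ht) (Forth false u Hu)).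
    + split; intros _ t u Ht Hu; exfalso.
      * exact (VacM t u Ht Hu).
      * exact (VacN t u Ht Hu).
Qed.

Lemma transfer_morphism : dot_morphism N M h.
Proof.
  intro x; split; [intro p; apply h_val|split].
  - intros y z Hy Hz _.
    destruct (h_local x) as [[Forth _]|[VacN _]].
    + exact (conj (Forth true y Hy) (Forth false z Hz)).
    + exfalso; exact (VacN y z Hy Hz).
  - intros y' z' Hy Hz _.
    destruct (h_local x) as [[_ Back]|[_ VacM]].
    + destruct (Back true y' Hy) as [y [Hy' Ey]].
      destruct (Back false z' Hz) as [z [Hz' Ez]].
      exists y, z; auto.
    + exfalso; exact (VacM y' z' Hy Hz).
Qed.

End Transfer.

Section Cover.
Variables (P : Type) (M : model P).

Inductive cover_state : Type :=
  | Orig (x : st M)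
  | Copy (i : bool) (s t : st M) (dead : ~ has_successor M t).
Arguments Copy i s t dead : clear implicits.

Definition cover_rel (k : bool) (a b : cover_state) : Prop :=
  match a, b with
  | Orig x, Orig y => Rel M k x y /\ has_successor M y
  | Orig x, Copy i s t _ | Copy i s t _, Orig x => i = k /\ s = x /\ Rel M k x t
  | Copy _ _ _ _, Copy _ _ _ _ => False
  end.

Definition proj (a : cover_state) : st M :=
  match a with Orig x => x | Copy _ _ t _ => t end.

Definition cover : model P :=
  @Model P cover_state (Orig (st0 M)) (cover_rel true) (cover_rel false)
    (fun p a => V M p (proj a)).

Lemma Rel_cover (k : bool) : Rel cover k = cover_rel k.
Proof. destruct k; reflexivity. Qed.

(* Edges between original states are edges of M into states with a
   successor; quasi-symmetry reverses them, and their source has a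
   successor as well. *)
Lemma cover_rel_sym :
  quasi_symmetric M -> forall k a b, cover_rel k a b -> cover_rel k b a.
Proof.
  intros Hq k [x|i s t Ht] [y|i' s' t' Ht']; simpl; try tauto.
  intros [Hxy [j [u Hyu]]]; split.
  - exact (Hq k j x y (ex_intro _ u Hyu) Hxy).
  - exists k, y; exact Hxy.
Qed.

Lemma cover_symmetric : quasi_symmetric M -> symmetric_model cover.
Proof. intro Hq; split; apply (cover_rel_sym Hq). Qed.

(* Original states are zig-zag points of the projection: a successor of x
   with a successor lifts to an original state, a dead one to its copy. *)
Lemma proj_zigzag_Orig (x : st M) : zigzag_at cover M proj (Orig x).
Proof.
  split; intros k; rewrite Rel_cover.
  - intros [y|i s t Ht]; simpl; [tauto|].
    intros (_ & _ & Hxt); exact Hxt.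
  - intros y' Hxy.
    destruct (classic (has_successor M y')) as [Hlive|Hdead].
    + exists (Orig y'); simpl; auto.
    + exists (Copy k x y' Hdead); simpl; auto.
Qed.

(* A copy has successors for a single relation only, and projects to a
   dead end: ⊡ is vacuous on both sides. *)
Lemma proj_vacuous_Copy (i : bool) (s t : st M) (Ht : ~ has_successor M t) :
  dot_vacuous cover (Copy i s t Ht) /\ dot_vacuous M t.
Proof.
  split; [|exact (dead_end_dot_vacuous Ht)].
  intros [y|? ? ? ?] [z|? ? ? ?]; simpl; try tauto.
  intros [-> _] [Hi _]; discriminate.
Qed.

Lemma proj_local (a : cover_state) :
  zigzag_at cover M proj a \/ (dot_vacuous cover a /\ dot_vacuous M (proj a)).
Proof.
  destruct a as [x|i s t Ht].
  - left; apply proj_zigzag_Orig.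
  - right; apply proj_vacuous_Copy.
Qed.

Lemma proj_surjective : surjective proj.
Proof. intro x; exists (Orig x); reflexivity. Qed.

End Cover.

Theorem mainTheorem15 (P : Type) (p0 : P) (M : model P) :
  quasi_symmetric M ->
  exists (Mp : model P) (h : st Mp -> st M),
    symmetric_model Mp /\ dot_morphism Mp M h /\ surjective h /\
    (forall (x : st Mp) (phi : form P), sat Mp x phi <-> sat M (h x) phi).
Proof.
  intro Hq.
  assert (h_val : forall p (a : st (cover M)), V (cover M) p a <-> V M p (proj a))
    by reflexivity.
  exists (cover M), (@proj P M); split; [|split; [|split]].
  - exact (cover_symmetric Hq).
  - exact (transfer_morphism h_val (@proj_local P M)).
  - exact (proj_surjective M).
  - exact (transfer_sat h_val (@proj_local P M)).
Qed.
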